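(* For all $n\ge 1$, \[\left|\mathrm{Av}_{n+2}[\overline{132},\overline{213},\overline{321}]\right|=\left|\mathcal{R}_n\right|.\]
   Context: For $\sigma\in S_m$, the cyclic permutation $[\sigma]$ is the set of all rotations of $\sigma$. $[\sigma]$ contains the totally vincular cyclic pattern $[\overline{abc}]$ (with $abc\in S_3$) if there are three cyclically consecutive entries $\sigma_i\sigma_{i+1}\sigma_{i+2}$ (indices mod $m$) order-isomorphic to $abc$; $\mathrm{Av}_m[\overline{132},\overline{213},\overline{321}]$ is the set of cyclic permutations of length $m$ containing none of these three patterns. A partial cyclic order on a set $X$ is a ternary relation $Z\subseteq X^3$ such that for all $x,y,z,u\in X$: $(x,y,z)\in Z\Rightarrow(y,z,x)\in Z$; $(x,y,z)\in Z\Rightarrow(z,y,x)\notin Z$; and $(x,y,z)\in Z$ and $(x,z,u)\in Z\Rightarrow(x,y,u)\in Z$. It is a total cyclic order if for every triple $(x,y,z)$ of distinct elements, $(x,y,z)\in Z$ or $(z,y,x)\in Z$. $\mathcal{R}_n$ is the set of total cyclic orders $Z$ on $[n+2]$ with $(i,i+1,i+2)\in Z$ for all $1\le i\le n$, $(n+1,n+2,1)\in Z$ and $(n+2,1,2)\in Z$. *)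

From mathcomp Require Import all_boot all_fingroup.
Set Implicit Arguments. Unset Strict Implicit. Unset Printing Implicit Defensive.

(* Conventions: [m] = {1..m} is represented by 'I_m = {0..m-1} (value v <-> v+1);
   a permutation sigma in S_m is a {perm 'I_m}, with sigma_i = s i (0-indexed). *)

Definition cshift (m : nat) (i : 'I_m) (k : nat) : 'I_m :=
  Ordinal (ltn_pmod (i + k) (leq_ltn_trans (leq0n i) (ltn_ord i))).

Definition cycperm (m : nat) (s : {perm 'I_m}) : {set {perm 'I_m}} :=
  [set t : {perm 'I_m} | [exists k : 'I_m, [forall i : 'I_m, t i == s (cshift i k)]]].

Definition order_iso3 (x p : nat -> nat) : bool :=
  [forall j : 'I_3, forall k : 'I_3, (x j < x k) == (p j < p k)].

Definition contains_tv (m : nat) (s : {perm 'I_m}) (p : nat -> nat) : bool :=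
  [exists i : 'I_m, order_iso3 (fun j => nat_of_ord (s (cshift i j))) p].

Definition pat132 (j : nat) : nat := nth 0 [:: 1; 3; 2] j.
Definition pat213 (j : nat) : nat := nth 0 [:: 2; 1; 3] j.
Definition pat321 (j : nat) : nat := nth 0 [:: 3; 2; 1] j.

Definition avoids3 (m : nat) (s : {perm 'I_m}) : bool :=
  [&& ~~ contains_tv s pat132, ~~ contains_tv s pat213 & ~~ contains_tv s pat321].

(* Av_m[132,213,321] : set of cyclic permutations (rotation classes) of length m
   avoiding the three patterns (containment is rotation invariant). *)
Definition Av (m : nat) : {set {set {perm 'I_m}}} :=
  [set cycperm s | s in [set s : {perm 'I_m} | avoids3 s]].

Definition partial_cyclic_order (X : finType) (Z : {set X * X * X}) : bool :=
  [forall x : X, forall y : X, forall z : X, forall u : X,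
    [&& ((x, y, z) \in Z) ==> ((y, z, x) \in Z),
        ((x, y, z) \in Z) ==> ((z, y, x) \notin Z) &
        (((x, y, z) \in Z) && ((x, z, u) \in Z)) ==> ((x, y, u) \in Z)]].

Definition total_cyclic_order (X : finType) (Z : {set X * X * X}) : bool :=
  partial_cyclic_order Z &&
  [forall x : X, forall y : X, forall z : X,
    [&& x != y, y != z & x != z] ==> (((x, y, z) \in Z) || ((z, y, x) \in Z))].

(* R_n : total cyclic orders Z on [n+2] (0-indexed: 'I_(n+2)) with
   (i,i+1,i+2) in Z for 1<=i<=n, (n+1,n+2,1) in Z, (n+2,1,2) in Z. *)
Definition Rn (n : nat) : {set {set 'I_n.+2 * 'I_n.+2 * 'I_n.+2}} :=
  [set Z : {set 'I_n.+2 * 'I_n.+2 * 'I_n.+2} |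
    [&& total_cyclic_order Z,
        [forall i : 'I_n.+2, (i < n) ==>
           ((inord i, inord i.+1, inord i.+2) \in Z)],
        ((inord n, inord n.+1, inord 0) \in Z) &
        ((inord n.+1, inord 0, inord 1) \in Z)]].

Set Warnings "-notation-overridden,-ambiguous-paths".
From mathcomp Require Import all_boot fingroup perm ssralg zmodp zify.
Import GRing.Theory.
Set Implicit Arguments. Unset Strict Implicit. Unset Printing Implicit Defensive.

(* A window of three distinct values avoids 132, 213 and 321 exactly when it is
   cyclically increasing (order-isomorphic to 123, 231 or 312). Hence sigma avoids
   the three patterns iff the cyclic order that sigma pulls back from the values
   orients every window (i, i+1, i+2) positively, which is the condition defining
   R_n. Conversely, a total cyclic order on [m] cut open at 1 is a linear order,
   and its rank function is the unique sigma with sigma(1) = 1 pulling it back.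
   As every rotation class has exactly one member with sigma(1) = 1, both sides
   are counted by the avoiding permutations fixing 1. *)

Definition cyc_incr (x y z : nat) : bool :=
  [|| (x < y) && (y < z), (y < z) && (z < x) | (z < x) && (x < y)].

Lemma cyc_incr_total x y z :
  x != y -> y != z -> x != z -> cyc_incr x y z || cyc_incr z y x.
Proof. rewrite /cyc_incr; lia. Qed.

Lemma cshift0 m (i : 'I_m) : cshift i 0 = i.
Proof. by apply: val_inj; rewrite /= addn0 modn_small. Qed.

Lemma eq_order_iso3 (x y p : nat -> nat) : x =1 y -> order_iso3 x p = order_iso3 y p.
Proof. by move=> xy; apply: eq_forallb => j; apply: eq_forallb => l; rewrite !xy. Qed.

Section Rotation.
Variable m : nat.
Implicit Types (s : {perm 'I_m.+1}) (i k : 'I_m.+1).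
Local Open Scope group_scope.

Lemma cshiftE i j : cshift i j = (i + inZp j)%R.
Proof. by apply: val_inj; rewrite /= modnDmr. Qed.

Lemma inZp_ord i : inZp i = i.
Proof. by apply: val_inj; rewrite /= modn_small. Qed.

Definition rot_perm k : {perm 'I_m.+1} := perm (addIr k).

Lemma rot_permE k i : rot_perm k i = (i + k)%R.
Proof. by rewrite permE. Qed.

Lemma contains_tv_rot s k p : contains_tv (rot_perm k * s) p -> contains_tv s p.
Proof.
case/existsP=> i iso; apply/existsP; exists (i + k)%R.
rewrite -(eq_order_iso3 _ (x := fun j => val ((rot_perm k * s) (cshift i j)))) // => j.
by rewrite permM rot_permE !cshiftE addrAC.
Qed.

Lemma avoids3_rot k s : avoids3 s -> avoids3 (rot_perm k * s).
Proof.
by case/and3P=> ? ? ?; apply/and3P; split; apply/negP => /contains_tv_rot; apply/negP.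
Qed.

Lemma cycperm_rot s k : cycperm (rot_perm k * s) = cycperm s.
Proof.
apply/setP => t; rewrite !inE.
apply/existsP/existsP => -[k' /forallP tE]; [exists (k' + k)%R | exists (k' - k)%R];
  apply/forallP => i; rewrite (eqP (tE i)) permM rot_permE !cshiftE !inZp_ord addrA //.
by rewrite subrK.
Qed.

Lemma cycperm_refl s : s \in cycperm s.
Proof.
rewrite inE; apply/existsP; exists ord0; apply/forallP => i.
by rewrite cshift0.
Qed.

Lemma cycperm_inj_rooted :
  {in [pred s : {perm 'I_m.+1} | s ord0 == ord0] &, injective (@cycperm m.+1)}.
Proof.
move=> s t /eqP s0 /eqP t0 st.
have : s \in cycperm t by rewrite -st cycperm_refl.
rewrite inE => /existsP[k /forallP sE].
have : t (cshift ord0 k) = t ord0 by rewrite -(eqP (sE ord0)) s0 t0.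
move/perm_inj/(congr1 val); rewrite /= add0n modn_small // => k0.
apply/permP => i; rewrite (eqP (sE i)); congr (t _).
by apply/val_inj; rewrite /= k0 addn0 modn_small.
Qed.

Lemma card_rotation_classes (P : pred {perm 'I_m.+1}) :
    (forall k s, P s -> P (rot_perm k * s)) ->
  #|[set cycperm s | s in [set s | P s]]| = #|[set s | P s & s ord0 == ord0]|.
Proof.
move=> P_rot.
suff -> : [set cycperm s | s in [set s | P s]] =
          @cycperm m.+1 @: [set s | P s & s ord0 == ord0].
  by rewrite card_in_imset // => s t; rewrite !inE => /andP[_ s0] /andP[_ t0];
    exact: cycperm_inj_rooted.
apply/setP => C; apply/imsetP/imsetP => -[s]; rewrite inE.
- move=> Ps ->; exists (rot_perm (s^-1 ord0) * s); last by rewrite cycperm_rot.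
  by rewrite inE P_rot //= permM rot_permE add0r permKV.
- by case/andP=> Ps _ ->; exists s; rewrite ?inE.
Qed.

End Rotation.

Lemma forall_ord3 (P : pred 'I_3) :
  [forall j, P j] = [&& P (inord 0), P (inord 1) & P (inord 2)].
Proof.
apply/forallP/and3P => [P_all | [P0 P1 P2] j]; first by split; apply: P_all.
have : (j : nat) \in [:: 0; 1; 2] by case: j => -[|[|[]]].
by rewrite !inE => /or3P[] /eqP j_val; rewrite -(inord_val j) j_val.
Qed.

Lemma patterns_cyc_incr (x : nat -> nat) :
    x 0 != x 1 -> x 1 != x 2 -> x 0 != x 2 ->
  [&& ~~ order_iso3 x pat132, ~~ order_iso3 x pat213 & ~~ order_iso3 x pat321]
  = cyc_incr (x 0) (x 1) (x 2).
Proof.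
rewrite /order_iso3 /pat132 /pat213 /pat321 /cyc_incr !forall_ord3 !inordK //= !ltnn.
case: (ltngtP (x 0) (x 1)); case: (ltngtP (x 1) (x 2)); case: (ltngtP (x 0) (x 2)) => //=; lia.
Qed.

Lemma cshift_inj m (i : 'I_m) j k : j < m -> k < m -> cshift i j = cshift i k -> j = k.
Proof.
move=> lt_jm lt_km /(congr1 val) /= /eqP.
by rewrite eqn_modDl !modn_small // => /eqP.
Qed.

Definition cyclic_order_of m (t : {perm 'I_m}) : {set 'I_m * 'I_m * 'I_m} :=
  [set u | cyc_incr (t u.1.1) (t u.1.2) (t u.2)].

Definition consecutive_cyclic m (Z : {set 'I_m * 'I_m * 'I_m}) : bool :=
  [forall i, (i, cshift i 1, cshift i 2) \in Z].

Lemma avoids3E m (t : {perm 'I_m}) :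
  2 < m -> avoids3 t = consecutive_cyclic (cyclic_order_of t).
Proof.
move=> lt2m; rewrite /avoids3 /contains_tv !negb_exists.
have window i : [&& ~~ order_iso3 (fun j => val (t (cshift i j))) pat132,
                    ~~ order_iso3 (fun j => val (t (cshift i j))) pat213 &
                    ~~ order_iso3 (fun j => val (t (cshift i j))) pat321]
                = ((i, cshift i 1, cshift i 2) \in cyclic_order_of t).
  have t_neq j k : j < 3 -> k < 3 -> j != k -> val (t (cshift i j)) != t (cshift i k).
    by move=> *; apply/eqP => /val_inj/perm_inj/cshift_inj; lia.
  by rewrite patterns_cyc_incr ?t_neq // inE /= cshift0.
apply/and3P/forallP => [[/forallP h1 /forallP h2 /forallP h3] i | h].
- by rewrite -window h1 h2 h3.
- by split; apply/forallP => i; have := h i; rewrite -window => /and3P[].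
Qed.

Section CutCyclicOrder.
Variables (X : finType) (Z : {set X * X * X}) (x0 : X).

Definition cut_lt (d a : X) : bool := ((d == x0) && (a != x0)) || ((x0, d, a) \in Z).

Definition cut_rank (a : X) : nat := #|[set d | cut_lt d a]|.

Hypothesis Z_total : total_cyclic_order Z.

Lemma cyc_axioms x y z u :
  [&& ((x, y, z) \in Z) ==> ((y, z, x) \in Z),
      ((x, y, z) \in Z) ==> ((z, y, x) \notin Z) &
      (((x, y, z) \in Z) && ((x, z, u) \in Z)) ==> ((x, y, u) \in Z)].
Proof. by case/andP: Z_total => /forallP/(_ x)/forallP/(_ y)/forallP/(_ z)/forallP. Qed.

Lemma cyc_rot x y z : (x, y, z) \in Z -> (y, z, x) \in Z.
Proof. by case/and3P: (cyc_axioms x y z x) => /implyP. Qed.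

Lemma cyc_asym x y z : (x, y, z) \in Z -> (z, y, x) \notin Z.
Proof. by case/and3P: (cyc_axioms x y z x) => _ /implyP. Qed.

Lemma cyc_trans x y z u : (x, y, z) \in Z -> (x, z, u) \in Z -> (x, y, u) \in Z.
Proof. by case/and3P: (cyc_axioms x y z u) => _ _ /implyP xyu *; apply: xyu; apply/andP. Qed.

Lemma cyc_total x y z :
  x != y -> y != z -> x != z -> ((x, y, z) \in Z) || ((z, y, x) \in Z).
Proof.
move=> *; case/andP: Z_total => _ /forallP/(_ x)/forallP/(_ y)/forallP/(_ z)/implyP.
by apply; apply/and3P.
Qed.

Lemma cyc_neq13 x y z : (x, y, z) \in Z -> x != z.
Proof. by move=> xyz; apply/eqP => xz; subst z; have := cyc_asym xyz; rewrite xyz. Qed.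

Lemma cyc_neq12 x y z : (x, y, z) \in Z -> x != y.
Proof. by move/cyc_rot/cyc_neq13; rewrite eq_sym. Qed.

Lemma cyc_neq23 x y z : (x, y, z) \in Z -> y != z.
Proof. by move/cyc_rot/cyc_neq12. Qed.

Lemma cut_lt_irr a : cut_lt a a = false.
Proof. by rewrite /cut_lt andbN; apply/negbTE/negP => /cyc_neq23; rewrite eqxx. Qed.

Lemma cut_lt_trans a b c : cut_lt a b -> cut_lt b c -> cut_lt a c.
Proof.
rewrite /cut_lt => /orP[/andP[/eqP-> b0] | ab] /orP[/andP[/eqP bx0 _] | bc].
- by rewrite bx0 eqxx in b0.
- by rewrite eqxx eq_sym (cyc_neq13 bc).
- by move: (cyc_neq13 ab); rewrite bx0 eqxx.
- by rewrite (cyc_trans ab bc) orbT.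
Qed.

Lemma cut_lt_total a b : a != b -> cut_lt a b || cut_lt b a.
Proof.
have [-> | a0] := eqVneq a x0; first by rewrite /cut_lt eqxx /= eq_sym => ->.
have [-> | b0] := eqVneq b x0; first by rewrite /cut_lt eqxx a0 !orbT.
move=> ab; rewrite /cut_lt (negbTE a0) (negbTE b0) /=.
have x0a : x0 != a by rewrite eq_sym.
have x0b : x0 != b by rewrite eq_sym.
by case/orP: (cyc_total x0a ab x0b) => [-> | /cyc_rot/cyc_rot ->]; rewrite ?orbT.
Qed.

Lemma cut_lt_cyc a b c : cut_lt a b -> cut_lt b c -> (a, b, c) \in Z.
Proof.
rewrite /cut_lt => /orP[/andP[/eqP-> b0] | ab] /orP[/andP[/eqP bx0 _] | bc] //.
- by rewrite bx0 eqxx in b0.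
- by move: (cyc_neq13 ab); rewrite bx0 eqxx.
- exact/cyc_rot/cyc_rot/(cyc_trans (cyc_rot bc))/cyc_rot/cyc_rot.
Qed.

Lemma cut_rank_ltE a b : (cut_rank a < cut_rank b) = cut_lt a b.
Proof.
have rank_lt c d : cut_lt c d -> cut_rank c < cut_rank d.
  move=> cd; apply/proper_card/properP; split.
  - by apply/subsetP => e; rewrite !inE => /cut_lt_trans; apply.
  - by exists c; rewrite !inE ?cut_lt_irr.
apply/idP/idP => [lt_ab | /rank_lt //].
have [ab | /cut_lt_total/orP[// | /rank_lt]] := eqVneq a b; first by rewrite ab ltnn in lt_ab.
by rewrite ltnNge (ltnW lt_ab).
Qed.

Lemma cut_rank_inj : injective cut_rank.
Proof.
move=> a b ab; apply/eqP; apply: contraT => /cut_lt_total.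
by rewrite -!cut_rank_ltE ab ltnn.
Qed.

Lemma cut_rank_lt_card a : cut_rank a < #|X|.
Proof.
rewrite -cardsT; apply/proper_card/properP; split; first exact: subsetT.
by exists a; rewrite !inE ?cut_lt_irr.
Qed.

Lemma cut_rank_base : cut_rank x0 = 0.
Proof.
apply/eqP; rewrite cards_eq0; apply/eqP/setP => d.
by rewrite !inE /cut_lt eqxx andbF /=; apply/negbTE/negP => /cyc_neq13; rewrite eqxx.
Qed.

Lemma cut_rank_cyc a b c : ((a, b, c) \in Z) = cyc_incr (cut_rank a) (cut_rank b) (cut_rank c).
Proof.
have cyc_of_incr x y z : cyc_incr (cut_rank x) (cut_rank y) (cut_rank z) -> (x, y, z) \in Z.
  rewrite /cyc_incr !cut_rank_ltE => /or3P[] /andP[lt1 lt2].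
  - exact: cut_lt_cyc lt1 lt2.
  - by apply/cyc_rot/cyc_rot; exact: cut_lt_cyc lt1 lt2.
  - by apply/cyc_rot; exact: cut_lt_cyc lt1 lt2.
apply/idP/idP => [abc | /cyc_of_incr //].
have neq x y : x != y -> cut_rank x != cut_rank y by rewrite (inj_eq cut_rank_inj).
case/orP: (cyc_incr_total (neq _ _ (cyc_neq12 abc)) (neq _ _ (cyc_neq23 abc))
                          (neq _ _ (cyc_neq13 abc))) => // /cyc_of_incr cba.
by move: (cyc_asym abc); rewrite cba.
Qed.

End CutCyclicOrder.

Lemma cyclic_order_of_total m (t : {perm 'I_m}) : total_cyclic_order (cyclic_order_of t).
Proof.
apply/andP; split.
- apply/forallP => x; apply/forallP => y; apply/forallP => z; apply/forallP => u.
  by rewrite !inE /=; apply/and3P; split; apply/implyP; rewrite /cyc_incr; lia.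
- apply/forallP => x; apply/forallP => y; apply/forallP => z.
  apply/implyP => /and3P[xy yz xz]; rewrite !inE /=.
  by apply: cyc_incr_total; rewrite val_eqE (inj_eq perm_inj).
Qed.

Lemma card_ord_lt N k : k <= N -> #|[set v : 'I_N | v < k]| = k.
Proof.
move=> le_kN; have widen_inj : injective (widen_ord le_kN) by move=> x y [] /val_inj.
rewrite -[RHS]card_ord -(card_imset _ widen_inj).
apply: eq_card => v; rewrite inE; apply/idP/imsetP => [lt_vk | [w _ ->]]; last exact: (ltn_ord w).
by exists (Ordinal lt_vk) => //; apply: val_inj.
Qed.

Lemma cut_rank_cyclic_order_of m (t : {perm 'I_m.+1}) a :
  t ord0 = ord0 -> cut_rank (cyclic_order_of t) ord0 a = t a.
Proof.
move=> t0; rewrite /cut_rank.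
have -> : [set d | cut_lt (cyclic_order_of t) ord0 d a] = t @^-1: [set v : 'I_m.+1 | v < t a].
  apply/setP => d; rewrite !inE /cut_lt inE /= t0.
  rewrite -[d == _](inj_eq (@perm_inj _ t)) -[a == _](inj_eq (@perm_inj _ t)) t0 -!val_eqE /=.
  by rewrite /cyc_incr; lia.
by rewrite card_preimset ?card_ord_lt //; [exact: ltnW | exact: perm_inj].
Qed.

Lemma cyclic_order_of_inj m :
  {in [pred t : {perm 'I_m.+1} | t ord0 == ord0] &, injective (@cyclic_order_of m.+1)}.
Proof.
move=> s t /eqP s0 /eqP t0 st; apply/permP => a; apply: val_inj.
by rewrite /= -(cut_rank_cyclic_order_of a s0) -(cut_rank_cyclic_order_of a t0) st.
Qed.

Lemma total_cyclic_orderP m (Z : {set 'I_m.+1 * 'I_m.+1 * 'I_m.+1}) :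
  reflect (exists2 t : {perm 'I_m.+1}, t ord0 = ord0 & Z = cyclic_order_of t)
          (total_cyclic_order Z).
Proof.
apply: (iffP idP) => [Z_total | [t _ ->]]; last exact: cyclic_order_of_total.
have rankK a : @inord m (cut_rank Z ord0 a) = cut_rank Z ord0 a :> nat.
  by rewrite inordK //; apply: leq_trans (cut_rank_lt_card ord0 Z_total a) _; rewrite card_ord.
have rank_inj : injective (fun a => inord (cut_rank Z ord0 a) : 'I_m.+1).
  by move=> a b /(congr1 val); rewrite /= !rankK => /(cut_rank_inj Z_total).
exists (perm rank_inj).
- by apply: val_inj; rewrite permE /= rankK cut_rank_base.
- apply/setP => -[[a b] c]; rewrite inE /= !permE !rankK.
  exact: cut_rank_cyc.
Qed.

Lemma forall_ord_split_last2 n (P : pred 'I_n.+2) :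
  [forall i, P i] = [&& [forall i : 'I_n.+2, (i < n) ==> P i], P (inord n) & P (inord n.+1)].
Proof.
apply/forallP/and3P => [P_all | [/forall_inP P_lt Pn Pn1] i].
  by split; [apply/forall_inP => i _ |..]; apply: P_all.
have [/P_lt // | le_ni] := ltnP i n.
have : (i : nat) \in [:: n; n.+1] by rewrite !inE; move: (ltn_ord i); lia.
by rewrite !inE => /orP[] /eqP i_val; rewrite -(inord_val i) i_val.
Qed.

Lemma RnE n : Rn n = [set Z | total_cyclic_order Z & consecutive_cyclic Z].
Proof.
have cshift_inord (i : 'I_n.+2) k j :
    j < n.+2 -> (i + k == j) || (i + k == j + n.+2) -> cshift i k = inord j.
  by move=> lt_j /orP[] /eqP ikj; apply: val_inj; rewrite /= inordK // ikj ?modnDr modn_small.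
apply/setP => Z; rewrite !inE /consecutive_cyclic forall_ord_split_last2; congr (_ && _).
congr [&& _, _ & _].
- apply: eq_forallb => i; case: ltnP => //= lt_in.
  by rewrite inord_val (cshift_inord i 1 i.+1) ?(cshift_inord i 2 i.+2) //; lia.
- by rewrite (cshift_inord _ 1 n.+1) ?(cshift_inord _ 2 0) ?inordK //; lia.
- by rewrite (cshift_inord _ 1 0) ?(cshift_inord _ 2 1) ?inordK //; lia.
Qed.

Lemma Rn_rooted_avoiders n :
  0 < n -> Rn n = @cyclic_order_of n.+2 @: [set t | avoids3 t & t ord0 == ord0].
Proof.
move=> n_gt0; apply/setP => Z; rewrite RnE inE.
apply/andP/imsetP => [[/total_cyclic_orderP[t t0 ->]] | [t]].
- by exists t; rewrite // inE avoids3E // t0 eqxx andbT.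
- rewrite inE avoids3E // => /andP[t_cons /eqP t0] ->; split => //.
  by apply/total_cyclic_orderP; exists t.
Qed.

Theorem theorem4p6 (n : nat) : 1 <= n -> #|Av n.+2| = #|Rn n|.
Proof.
move=> n_gt0; rewrite /Av card_rotation_classes; last exact: avoids3_rot.
rewrite Rn_rooted_avoiders // card_in_imset // => s t.
by rewrite !inE => /andP[_ s0] /andP[_ t0]; apply: cyclic_order_of_inj.
Qed.
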